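(* Let $L$ be an i--lattice and let $\theta\in{\rm Con}(L)$ be such that every $\alpha\in{\rm Con}(L)$ satisfies $\alpha\subseteq\theta$ or $\theta\subseteq\alpha$. Then $\theta\in{\rm Con}_{\mathbb{I}}(L)$.
   Context: An i--lattice is a lattice $L$ with a unary operation $'$ such that $a''=a$ and $a\leq b$ implies $b'\leq a'$ for all $a,b\in L$. ${\rm Con}(L)$ is the lattice of lattice congruences of $L$, and ${\rm Con}_{\mathbb{I}}(L)$ is the set of lattice congruences $\theta$ that also preserve the involution, i.e. $(a,b)\in\theta$ implies $(a',b')\in\theta$. *)

From HB Require Import structures.
From mathcomp Require Import all_boot all_order.
Set Implicit Arguments. Unset Strict Implicit. Unset Printing Implicit Defensive.
Import Order.TTheory.
Local Open Scope order_scope.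

Definition is_ilattice_inv (d : Order.disp_t) (L : latticeType d) (inv : L -> L) : Prop :=
  (forall a : L, inv (inv a) = a) /\
  (forall a b : L, a <= b -> inv b <= inv a).

Definition lattice_congruence (d : Order.disp_t) (L : latticeType d) (th : L -> L -> Prop) : Prop :=
  (forall a : L, th a a) /\
  (forall a b : L, th a b -> th b a) /\
  (forall a b c : L, th a b -> th b c -> th a c) /\
  (forall a b c e : L, th a b -> th c e -> th (a `&` c) (b `&` e)) /\
  (forall a b c e : L, th a b -> th c e -> th (a `|` c) (b `|` e)).

Definition rel_sub (T : Type) (al th : T -> T -> Prop) : Prop :=
  forall a b : T, al a b -> th a b.

Definition ilattice_congruence (d : Order.disp_t) (L : latticeType d) (inv : L -> L)
  (th : L -> L -> Prop) : Prop :=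
  lattice_congruence th /\ (forall a b : L, th a b -> th (inv a) (inv b)).

(* The involution is an order anti-automorphism, so it exchanges meets and
   joins; hence the conjugate relation  theta'(a, b) := theta(a', b')  is again
   a lattice congruence.  By hypothesis it is comparable with theta, and since
   conjugation is an involution on relations, either inclusion yields
   theta <= theta', which says precisely that theta preserves the involution. *)
From HB Require Import structures.
From mathcomp Require Import all_boot all_order.
Set Implicit Arguments. Unset Strict Implicit. Unset Printing Implicit Defensive.
Import Order.TTheory.
Local Open Scope order_scope.

Section Involution.

Variables (d : Order.disp_t) (L : latticeType d) (inv : L -> L).
Hypothesis invK : involutive inv.
Hypothesis le_inv : forall a b : L, a <= b -> inv b <= inv a.

Lemma le_inv2 (a b : L) : (inv a <= inv b) = (b <= a).
Proof. by apply/idP/idP => [/le_inv|/le_inv //]; rewrite !invK. Qed.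

Lemma le_invl (a b : L) : (inv a <= b) = (inv b <= a).
Proof. by rewrite -le_inv2 invK. Qed.

Lemma inv_meet (a b : L) : inv (a `&` b) = inv a `|` inv b.
Proof.
apply/le_anti; rewrite leUx !le_inv2 leIl leIr andbT.
by rewrite le_invl lexI !(le_invl (_ `|` _)) leUl leUr.
Qed.

Lemma inv_join (a b : L) : inv (a `|` b) = inv a `&` inv b.
Proof. by rewrite -{1}(invK a) -{1}(invK b) -inv_meet invK. Qed.

Definition inv_rel (th : L -> L -> Prop) (a b : L) : Prop := th (inv a) (inv b).

Lemma inv_rel_congruence (th : L -> L -> Prop) :
  lattice_congruence th -> lattice_congruence (inv_rel th).
Proof.
case=> refl [sym [trans [meet join]]]; rewrite /inv_rel.
split; first by move=> a; apply: refl.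
split; first by move=> a b; apply: sym.
split; first by move=> a b c; apply: trans.
by split=> a b c e thab thce; rewrite ?inv_meet ?inv_join; [apply: join | apply: meet].
Qed.

Lemma rel_sub_inv_rel (th : L -> L -> Prop) :
  rel_sub (inv_rel th) th <-> rel_sub th (inv_rel th).
Proof.
split=> sub a b; last by move=> /sub; rewrite /inv_rel !invK.
by move=> thab; apply: sub; rewrite /inv_rel !invK.
Qed.

End Involution.

Theorem proposition4p6 (d : Order.disp_t) (L : latticeType d) (inv : L -> L)
  (hinv : is_ilattice_inv inv) (theta : L -> L -> Prop)
  (htheta : lattice_congruence theta)
  (hcomp : forall alpha : L -> L -> Prop, lattice_congruence alpha ->
             rel_sub alpha theta \/ rel_sub theta alpha) :
  ilattice_congruence inv theta.
Proof.
case: hinv => invK le_inv; split=> //.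
by have [/(rel_sub_inv_rel invK)|] := hcomp _ (inv_rel_congruence invK le_inv htheta).
Qed.
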